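(* Let $u$ be the solution of the Cauchy problem in the context, and assume $m_1=0$ and $m_0\ge\sigma/f_0$. Then $\lim_{t\to+\infty}u(x,t)=1$ for every $x\in[0,1]$. Moreover, for all $x\in[0,1]$ and $t\ge0$, \[ 1\ge u(x,t)\ge1-\frac{1-x}{1+\frac{\sigma(1-x)}{m_0f_0-\sigma}\big(e^{(m_0f_0-\sigma)t}-1\big)}\quad\text{if } m_0>\sigma/f_0, \] \[ 1\ge u(x,t)\ge1-\frac{1-x}{1+\sigma(1-x)t}\quad\text{if } m_0=\sigma/f_0. \]
   Context: Constants: $f_0>0$, $f_1\ge0$ with $\sigma=f_0-f_1>0$; $\lambda_0,\lambda_1\ge0$; $\gamma_0,\gamma_1\in(0,1]$; $m_0=\lambda_0\gamma_0$, $m_1=\lambda_1\gamma_1$. With $\mathcal{J}_0u(x,t)=u(x+\gamma_0(1-x),t)-u(x,t)$ and $\mathcal{J}_1u(x,t)=u(x-\gamma_1x,t)-u(x,t)$, $u$ is the unique (mild) solution, which is $C^\infty$ on $[0,1]\times[0,\infty)$, of \[ \partial_tu+\sigma(1-x)x\,\partial_xu=\lambda_0f_0\mathcal{J}_0u+\lambda_1f_1\mathcal{J}_1u\ (0\le x\le1,\ t>0),\quad u(x,0)=x. \] *)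

From Stdlib Require Import Reals.
From Coquelicot Require Import Coquelicot.
Open Scope R_scope.

Definition in_dom (x t : R) : Prop := 0 <= x <= 1 /\ 0 <= t.

Definition cont_on (S : R -> R -> Prop) (f : R -> R -> R) : Prop :=
  forall x t, S x t -> forall eps, 0 < eps -> exists delta, 0 < delta /\
    forall y s, S y s -> Rabs (y - x) < delta -> Rabs (s - t) < delta ->
      Rabs (f y s - f x t) < eps.

Definition is_pderiv_x (u : R -> R -> R) (x t d : R) : Prop :=
  forall eps, 0 < eps -> exists delta, 0 < delta /\
    forall y, 0 <= y <= 1 -> y <> x -> Rabs (y - x) < delta ->
      Rabs ((u y t - u x t) / (y - x) - d) < eps.

Definition J0 (g0 : R) (u : R -> R -> R) (x t : R) : R :=
  u (x + g0 * (1 - x)) t - u x t.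
Definition J1 (g1 : R) (u : R -> R -> R) (x t : R) : R :=
  u (x - g1 * x) t - u x t.

(* u is a classical (C^1) solution on D of
   d_t u + sigma (1-x) x d_x u = l0 f0 J0 u + l1 f1 J1 u,  u(x,0) = x,
   with sigma = f0 - f1; ux, ut are its partial derivatives. *)
Definition is_solution (f0 f1 l0 l1 g0 g1 : R) (u : R -> R -> R) : Prop :=
  exists ux ut : R -> R -> R,
    cont_on in_dom u /\
    cont_on (fun x t => 0 <= x <= 1 /\ 0 < t) ux /\
    cont_on (fun x t => 0 <= x <= 1 /\ 0 < t) ut /\
    (forall x t, 0 <= x <= 1 -> 0 < t -> is_pderiv_x u x t (ux x t)) /\
    (forall x t, 0 <= x <= 1 -> 0 < t -> is_derive (fun s => u x s) t (ut x t)) /\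
    (forall x t, 0 <= x <= 1 -> 0 < t ->
       ut x t + (f0 - f1) * (1 - x) * x * ux x t
       = l0 * f0 * J0 g0 u x t + l1 * f1 * J1 g1 u x t) /\
    (forall x, 0 <= x <= 1 -> u x 0 = x).

(* With [m1 = 0] the equation reads [L u = 0] for the operator
   [L w = w_t + σ(1-x)x w_x - λ0 f0 J0 w], which obeys a comparison principle:
   at a maximum of [w - eps t] the transport term vanishes and the jump term is
   nonpositive, so [L w <= 0] and [w(.,0) <= 0] force [w <= 0].  The constant [1]
   is a solution, and [1 - (1-x)/(A(t) + (1-x)C(t))] is a subsolution as soon as
   [A' = k A] and [C' = σ A], where [k = m0 f0 - σ >= 0]; taking [A = e^{kt}],
   [C = σ(e^{kt}-1)/k] (or [A = 1], [C = σt] when [k = 0]) gives the bounds, both of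
   which squeeze [u] to [1]. *)

From Stdlib Require Import Reals Lra ClassicalEpsilon.
From Coquelicot Require Import Coquelicot.
Open Scope R_scope.

Lemma cont_on_subset (S S' : R -> R -> Prop) (f : R -> R -> R) :
  (forall x t, S' x t -> S x t) -> cont_on S f -> cont_on S' f.
Proof.
  intros HS Hf x t Hx eps Heps.
  destruct (Hf x t (HS x t Hx) eps Heps) as [d [Hd Hd']].
  exists d; split; [exact Hd|]. intros y s Hy; apply Hd', HS, Hy.
Qed.

Lemma cont_on_minus (S : R -> R -> Prop) (f g : R -> R -> R) :
  cont_on S f -> cont_on S g -> cont_on S (fun x t => f x t - g x t).
Proof.
  intros Hf Hg x t Hx eps Heps.
  destruct (Hf x t Hx (eps / 2)) as [d1 [Hd1 H1]]; [lra|].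
  destruct (Hg x t Hx (eps / 2)) as [d2 [Hd2 H2]]; [lra|].
  exists (Rmin d1 d2); split; [now apply Rmin_pos|].
  intros y s Hy Hyx Hst.
  pose proof (Rmin_l d1 d2); pose proof (Rmin_r d1 d2).
  specialize (H1 y s Hy ltac:(lra) ltac:(lra)); specialize (H2 y s Hy ltac:(lra) ltac:(lra)).
  revert H1 H2; split_Rabs; lra.
Qed.

Lemma cont_on_of_continuity_2d (S : R -> R -> Prop) (f : R -> R -> R) :
  (forall x t, S x t -> continuity_2d_pt f x t) -> cont_on S f.
Proof.
  intros Hf x t Hx eps Heps.
  destruct (Hf x t Hx (mkposreal eps Heps)) as [d Hd].
  exists d; split; [apply cond_pos|]. intros y s _; apply Hd.
Qed.

Lemma is_pderiv_x_minus (u v : R -> R -> R) (x t du dv : R) :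
  is_pderiv_x u x t du -> is_pderiv_x v x t dv ->
  is_pderiv_x (fun y s => u y s - v y s) x t (du - dv).
Proof.
  intros Hu Hv eps Heps.
  destruct (Hu (eps / 2)) as [d1 [Hd1 H1]]; [lra|].
  destruct (Hv (eps / 2)) as [d2 [Hd2 H2]]; [lra|].
  exists (Rmin d1 d2); split; [now apply Rmin_pos|].
  intros y Hy Hyx Hd.
  pose proof (Rmin_l d1 d2); pose proof (Rmin_r d1 d2).
  specialize (H1 y Hy Hyx ltac:(lra)); specialize (H2 y Hy Hyx ltac:(lra)).
  replace ((u y t - v y t - (u x t - v x t)) / (y - x) - (du - dv))
    with (((u y t - u x t) / (y - x) - du) - ((v y t - v x t) / (y - x) - dv))
    by (field; lra).
  revert H1 H2; split_Rabs; lra.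
Qed.

(** * Maxima of continuous functions on a rectangle *)

Definition rect (a b c d x t : R) : Prop := a <= x <= b /\ c <= t <= d.

Definition clamp (a b x : R) : R := Rmax a (Rmin b x).

Lemma clamp_in (a b x : R) : a <= b -> a <= clamp a b x <= b.
Proof. intros; unfold clamp, Rmax, Rmin; repeat destruct Rle_dec; lra. Qed.

Lemma clamp_id (a b x : R) : a <= x <= b -> clamp a b x = x.
Proof. intros; unfold clamp, Rmax, Rmin; repeat destruct Rle_dec; lra. Qed.

Lemma clamp_lipschitz (a b x y : R) :
  a <= b -> Rabs (clamp a b x - clamp a b y) <= Rabs (x - y).
Proof. intros; unfold clamp, Rmax, Rmin; repeat destruct Rle_dec; split_Rabs; lra. Qed.

Section RectangleMax.

Variables (f : R -> R -> R) (a b c d : R).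
Hypotheses (Hab : a <= b) (Hcd : c <= d) (Hf : cont_on (rect a b c d) f).

(* Composing with the clamps extends [f] continuously to the whole plane. *)
Let F (x t : R) : R := f (clamp a b x) (clamp c d t).

Lemma clamped_continuity_2d (x t : R) : continuity_2d_pt F x t.
Proof.
  intros eps.
  assert (Hin : rect a b c d (clamp a b x) (clamp c d t)) by (split; now apply clamp_in).
  destruct (Hf _ _ Hin eps (cond_pos eps)) as [dl [Hdl H]].
  exists (mkposreal dl Hdl); intros y s Hy Hs; simpl in Hy, Hs.
  apply H; [split; now apply clamp_in| |];
    eapply Rle_lt_trans; try apply clamp_lipschitz; assumption.
Qed.

Lemma clamped_uniform_continuity (eps : posreal) :
  exists dl : posreal, forall x t x' t',
    Rabs (x - x') < dl -> Rabs (t - t') < dl -> Rabs (F x t - F x' t') < eps.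
Proof.
  destruct (uniform_continuity_2d F a b c d
              (fun x t _ _ => clamped_continuity_2d x t) eps) as [dl Hdl].
  exists dl; intros x t x' t' Hx Ht.
  assert (HF : forall y s, F y s = F (clamp a b y) (clamp c d s))
    by (intros y s; unfold F;
        rewrite (clamp_id a b (clamp a b y)), (clamp_id c d (clamp c d s));
        auto using clamp_in).
  rewrite (HF x t), (HF x' t').
  apply Hdl; try (now apply clamp_in);
    eapply Rle_lt_trans; try apply clamp_lipschitz; auto;
    rewrite Rabs_minus_sym; assumption.
Qed.

Lemma cont_on_rect_max :
  exists xs ts, rect a b c d xs ts /\
    forall x t, rect a b c d x t -> f x t <= f xs ts.
Proof.
  assert (Hx : forall t, exists xm, (forall x, a <= x <= b -> F x t <= F xm t) /\ a <= xm <= b).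
  { intro t; apply continuity_ab_maj; [exact Hab|]; intros x _ eps Heps.
    destruct (clamped_uniform_continuity (mkposreal eps Heps)) as [dl Hdl].
    exists dl; split; [apply cond_pos|]; intros y [_ Hy]; simpl in *; unfold R_dist in *.
    apply Hdl; [exact Hy|]; rewrite Rminus_eq_0, Rabs_R0; apply cond_pos. }
  destruct (choice _ Hx) as [xm Hxm].
  set (m t := F (xm t) t).
  destruct (continuity_ab_maj m c d Hcd) as [ts [Hmax Hts]].
  { (* Both [m t] and [m t0] are maxima, so they differ by at most the oscillation
       of [F] between times [t] and [t0] at the two maximizers. *)
    intros t0 _ eps Heps.
    destruct (clamped_uniform_continuity (mkposreal eps Heps)) as [dl Hdl].
    exists dl; split; [apply cond_pos|]; intros t [_ Ht]; simpl in *; unfold R_dist, m in *.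
    assert (Hxx : forall x, Rabs (x - x) < dl)
      by (intro x; rewrite Rminus_eq_0, Rabs_R0; apply cond_pos).
    pose proof (Hdl _ _ _ _ (Hxx (xm t)) Ht) as Hosc.
    pose proof (Hdl _ _ _ _ (Hxx (xm t0)) Ht) as Hosc0.
    pose proof (proj1 (Hxm t) (xm t0) (proj2 (Hxm t0))).
    pose proof (proj1 (Hxm t0) (xm t) (proj2 (Hxm t))).
    revert Hosc Hosc0; split_Rabs; lra. }
  exists (clamp a b (xm ts)), (clamp c d ts); split; [split; now apply clamp_in|].
  intros x t [Hx' Ht'].
  pose proof (proj1 (Hxm t) x Hx'); pose proof (Hmax t Ht').
  unfold m, F in *; rewrite (clamp_id a b x Hx'), (clamp_id c d t Ht') in *; lra.
Qed.

End RectangleMax.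

Lemma derive_nonneg_at_left_max (g : R -> R) (a t d : R) :
  a < t -> is_derive g t d -> (forall r, a <= r <= t -> g r <= g t) -> 0 <= d.
Proof.
  intros Hat Hg Hmax; apply Rnot_lt_le; intro Hd.
  destruct (proj1 (is_derive_Reals g t d) Hg (- d) ltac:(lra)) as [dl Hdl].
  pose proof (cond_pos dl).
  set (h := - Rmin (dl / 2) ((t - a) / 2)).
  assert (Hh : 0 < - h) by (unfold h; rewrite Ropp_involutive; apply Rmin_pos; lra).
  assert (Hh' : - h <= dl / 2 /\ - h <= (t - a) / 2)
    by (unfold h; rewrite Ropp_involutive; split; [apply Rmin_l | apply Rmin_r]).
  specialize (Hdl h ltac:(lra) ltac:(rewrite Rabs_left; lra)).
  specialize (Hmax (t + h) ltac:(lra)).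
  assert (0 <= (g (t + h) - g t) / h).
  { replace ((g (t + h) - g t) / h) with ((g t - g (t + h)) / - h) by (field; lra).
    apply Rdiv_le_0_compat; lra. }
  revert Hdl; split_Rabs; lra.
Qed.

Lemma is_pderiv_x_interior (w : R -> R -> R) (x t d : R) :
  0 < x < 1 -> is_pderiv_x w x t d -> derivable_pt_lim (fun y => w y t) x d.
Proof.
  intros Hx Hw eps Heps.
  destruct (Hw eps Heps) as [dl [Hdl H]].
  assert (Hpos : 0 < Rmin dl (Rmin x (1 - x))) by (repeat apply Rmin_pos; lra).
  exists (mkposreal _ Hpos); intros h Hh Hhd; simpl in Hhd.
  pose proof (Rmin_l dl (Rmin x (1 - x))); pose proof (Rmin_r dl (Rmin x (1 - x))).
  pose proof (Rmin_l x (1 - x)); pose proof (Rmin_r x (1 - x)).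
  specialize (H (x + h)).
  replace (x + h - x) with h in H by ring.
  apply H; [revert Hhd; split_Rabs; lra | lra | lra].
Qed.

Lemma pderiv_x_zero_at_max (w : R -> R -> R) (x t d : R) :
  0 < x < 1 -> is_pderiv_x w x t d ->
  (forall y, 0 <= y <= 1 -> w y t <= w x t) -> d = 0.
Proof.
  intros Hx Hw Hmax.
  pose proof (is_pderiv_x_interior w x t d Hx Hw) as Hd.
  rewrite <- (derive_pt_eq_0 _ _ _ (exist _ d Hd) Hd).
  apply (deriv_maximum _ 0 1); try lra.
  intros y Hy0 Hy1; apply Hmax; lra.
Qed.

(** * The comparison principle *)

(* With [s = σ], [a = λ0 f0], [g = γ0] this is the operator of the Cauchy problem
   when [λ1 γ1 = 0]. *)
Definition evol_op (s a g : R) (w wx wt : R -> R -> R) (x t : R) : R :=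
  wt x t + s * (1 - x) * x * wx x t - a * J0 g w x t.

Definition has_partials (w wx wt : R -> R -> R) : Prop :=
  cont_on in_dom w /\
  forall x t, 0 <= x <= 1 -> 0 < t ->
    is_pderiv_x w x t (wx x t) /\ is_derive (fun r => w x r) t (wt x t).

Lemma has_partials_minus (v vx vt w wx wt : R -> R -> R) :
  has_partials v vx vt -> has_partials w wx wt ->
  has_partials (fun x t => v x t - w x t)
    (fun x t => vx x t - wx x t) (fun x t => vt x t - wt x t).
Proof.
  intros [Hv Hv'] [Hw Hw']; split; [now apply cont_on_minus|].
  intros x t Hx Ht; destruct (Hv' x t Hx Ht), (Hw' x t Hx Ht); split.
  - now apply is_pderiv_x_minus.
  - now apply (is_derive_minus (fun r => v x r) (fun r => w x r)).
Qed.

Lemma evol_op_ge_dt_at_space_max (s a g : R) (w wx wt : R -> R -> R) (x t : R) :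
  0 <= a -> 0 <= g <= 1 -> 0 <= x <= 1 -> is_pderiv_x w x t (wx x t) ->
  (forall y, 0 <= y <= 1 -> w y t <= w x t) -> wt x t <= evol_op s a g w wx wt x t.
Proof.
  intros Ha Hg Hx Hwx Hmax.
  assert (Hdx : (1 - x) * x * wx x t = 0).
  { destruct (Req_dec x 0) as [->|Hx0]; [ring|].
    destruct (Req_dec x 1) as [->|Hx1]; [ring|].
    rewrite (pderiv_x_zero_at_max w x t (wx x t)); [ring | lra | exact Hwx | exact Hmax]. }
  assert (Hjump : J0 g w x t <= 0)
    by (unfold J0; pose proof (Hmax (x + g * (1 - x)) ltac:(nra)); lra).
  unfold evol_op.
  replace (s * (1 - x) * x * wx x t) with (s * ((1 - x) * x * wx x t)) by ring.
  rewrite Hdx; nra.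
Qed.

Lemma max_principle (s a g : R) (w wx wt : R -> R -> R) :
  0 <= a -> 0 <= g <= 1 -> has_partials w wx wt ->
  (forall x t, 0 <= x <= 1 -> 0 < t -> evol_op s a g w wx wt x t <= 0) ->
  (forall x, 0 <= x <= 1 -> w x 0 <= 0) ->
  forall x t, 0 <= x <= 1 -> 0 <= t -> w x t <= 0.
Proof.
  intros Ha Hg [Hcont Hpart] Hop Hinit x0 t0 Hx0 Ht0.
  apply Rnot_lt_le; intro Hpos.
  (* At a maximum of [w - eps t] over [0,1] x [0,t0] the time derivative of [w] is
     at least [eps], whereas [evol_op <= 0] forces it to be nonpositive. *)
  set (eps := w x0 t0 / (2 * (t0 + 1))).
  assert (Heps : 0 < eps) by (apply Rdiv_lt_0_compat; lra).
  assert (Heps_t0 : eps * t0 < w x0 t0)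
    by (unfold eps; apply Rmult_lt_reg_r with (2 * (t0 + 1)); [lra|];
        field_simplify; nra).
  set (v y r := w y r - eps * r).
  assert (Hv : cont_on (rect 0 1 0 t0) v).
  { apply cont_on_minus.
    - apply (cont_on_subset in_dom); [intros y r [Hy Hr]; split; lra | exact Hcont].
    - apply cont_on_of_continuity_2d; intros y r _.
      apply continuity_2d_pt_mult; [apply continuity_2d_pt_const | apply continuity_2d_pt_id2]. }
  destruct (cont_on_rect_max v 0 1 0 t0 ltac:(lra) ltac:(lra) Hv)
    as [xs [ts [[Hxs Hts] Hmax]]].
  assert (Hvs : 0 < w xs ts - eps * ts)
    by (pose proof (Hmax x0 t0 (conj Hx0 (conj Ht0 (Rle_refl t0)))); unfold v in *; lra).
  assert (Hts0 : 0 < ts).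
  { destruct (proj1 Hts) as [|<-]; [assumption|]; pose proof (Hinit xs Hxs); lra. }
  destruct (Hpart xs ts Hxs Hts0) as [Hwx Hwt].
  assert (Hdt : eps <= wt xs ts).
  { enough (0 <= wt xs ts - eps) by lra.
    apply (derive_nonneg_at_left_max (fun r => w xs r - eps * r) 0 ts); [exact Hts0| |].
    - assert (Hpen : is_derive (fun r => eps * r) ts eps) by (auto_derive; [exact I | ring]).
      exact (is_derive_minus _ _ _ _ _ Hwt Hpen).
    - intros r Hr; apply (Hmax xs r); split; [exact Hxs | lra]. }
  assert (Hspace : forall y, 0 <= y <= 1 -> w y ts <= w xs ts)
    by (intros y Hy; pose proof (Hmax y ts (conj Hy Hts)); unfold v in *; lra).
  pose proof (evol_op_ge_dt_at_space_max s a g w wx wt xs ts Ha Hg Hxs Hwx Hspace).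
  pose proof (Hop xs ts Hxs Hts0); lra.
Qed.

Lemma comparison_principle (s a g : R) (v vx vt w wx wt : R -> R -> R) :
  0 <= a -> 0 <= g <= 1 -> has_partials v vx vt -> has_partials w wx wt ->
  (forall x t, 0 <= x <= 1 -> 0 < t ->
     evol_op s a g v vx vt x t <= evol_op s a g w wx wt x t) ->
  (forall x, 0 <= x <= 1 -> v x 0 <= w x 0) ->
  forall x t, 0 <= x <= 1 -> 0 <= t -> v x t <= w x t.
Proof.
  intros Ha Hg Hv Hw Hop Hinit x t Hx Ht.
  enough (v x t - w x t <= 0) by lra.
  apply (max_principle s a g _ _ _ Ha Hg (has_partials_minus _ _ _ _ _ _ Hv Hw));
    [|intros y Hy; pose proof (Hinit y Hy); lra | exact Hx | exact Ht].
  intros y r Hy Hr; pose proof (Hop y r Hy Hr); unfold evol_op, J0 in *; lra.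
Qed.

(** * The barrier subsolution *)

Lemma is_derive_pderiv_x (w : R -> R -> R) (x t d : R) :
  is_derive (fun y => w y t) x d -> is_pderiv_x w x t d.
Proof.
  intros Hw eps Heps.
  destruct (proj1 (is_derive_Reals _ _ _) Hw eps Heps) as [dl Hdl].
  exists dl; split; [apply cond_pos|]; intros y _ Hyx Hd.
  specialize (Hdl (y - x) ltac:(lra) Hd); now replace (x + (y - x)) with y in Hdl by ring.
Qed.

Lemma continuity_2d_pt_of_time (A : R -> R) (x t d : R) :
  is_derive A t d -> continuity_2d_pt (fun _ r => A r) x t.
Proof.
  intros HA; apply (continuity_1d_2d_pt_comp A (fun _ r => r)); [|apply continuity_2d_pt_id2].
  exact (derivable_continuous_pt A t (exist _ d (proj1 (is_derive_Reals _ _ _) HA))).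
Qed.

Definition barrier (A C : R -> R) (x t : R) : R :=
  1 - (1 - x) / (A t + (1 - x) * C t).

Definition barrier_dx (A C : R -> R) (x t : R) : R :=
  A t / (A t + (1 - x) * C t) ^ 2.

Definition barrier_dt (k s : R) (A C : R -> R) (x t : R) : R :=
  (1 - x) * (k * A t + (1 - x) * (s * A t)) / (A t + (1 - x) * C t) ^ 2.

Section Barrier.

Variables (s a g : R) (A C : R -> R).
Hypotheses (Ha : 0 <= a) (Hg : 0 <= g <= 1)
  (HA : forall t, is_derive A t ((a * g - s) * A t))
  (HC : forall t, is_derive C t (s * A t))
  (HA_pos : forall t, 0 <= t -> 0 < A t)
  (HC_nonneg : forall t, 0 <= t -> 0 <= C t).

Lemma barrier_denom_pos (x t : R) : 0 <= x <= 1 -> 0 <= t -> 0 < A t + (1 - x) * C t.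
Proof. intros Hx Ht; pose proof (HA_pos t Ht); pose proof (HC_nonneg t Ht); nra. Qed.

Lemma barrier_has_partials :
  has_partials (barrier A C) (barrier_dx A C) (barrier_dt (a * g - s) s A C).
Proof.
  split.
  - apply cont_on_of_continuity_2d; intros x t [Hx Ht].
    pose proof (barrier_denom_pos x t Hx Ht).
    assert (H1x : continuity_2d_pt (fun y _ => 1 - y) x t)
      by (apply continuity_2d_pt_minus; [apply continuity_2d_pt_const | apply continuity_2d_pt_id1]).
    apply continuity_2d_pt_minus; [apply continuity_2d_pt_const|].
    apply continuity_2d_pt_mult; [exact H1x|].
    apply continuity_2d_pt_inv; [|lra].
    apply continuity_2d_pt_plus; [exact (continuity_2d_pt_of_time A x t _ (HA t))|].
    apply continuity_2d_pt_mult; [exact H1x | exact (continuity_2d_pt_of_time C x t _ (HC t))].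
  - intros x t Hx Ht; pose proof (barrier_denom_pos x t Hx (Rlt_le _ _ Ht)); split.
    + apply is_derive_pderiv_x; unfold barrier, barrier_dx.
      auto_derive; [lra | field; lra].
    + unfold barrier, barrier_dt; auto_derive.
      * repeat split; [exists ((a * g - s) * A t); apply HA | exists (s * A t); apply HC | lra].
      * replace (Derive (fun r : R => A r) t) with ((a * g - s) * A t)
          by (symmetry; apply is_derive_unique, HA).
        replace (Derive (fun r : R => C r) t) with (s * A t)
          by (symmetry; apply is_derive_unique, HC).
        field; lra.
Qed.

Lemma barrier_evol_op_nonpos (x t : R) : 0 <= x <= 1 -> 0 <= t ->
  evol_op s a g (barrier A C) (barrier_dx A C) (barrier_dt (a * g - s) s A C) x t <= 0.
Proof.
  intros Hx Ht.
  set (x' := x + g * (1 - x)).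
  assert (Hx' : 0 <= x' <= 1) by (unfold x'; nra).
  pose proof (barrier_denom_pos x t Hx Ht) as HD.
  pose proof (barrier_denom_pos x' t Hx' Ht) as HD'.
  (* Only the jump term survives: the transport terms cancel against the
     time derivative because [A' = (a g - s) A] and [C' = s A]. *)
  assert (Hop : evol_op s a g (barrier A C) (barrier_dx A C) (barrier_dt (a * g - s) s A C) x t
    = - (a * g ^ 2 * A t * C t * (1 - x) ^ 2)
        / ((A t + (1 - x') * C t) * (A t + (1 - x) * C t) ^ 2)).
  { unfold evol_op, J0, barrier, barrier_dx, barrier_dt; fold x'.
    replace (1 - x') with ((1 - g) * (1 - x)) in * by (unfold x'; ring).
    field; lra. }
  rewrite Hop; apply Rmult_le_0_r; [|left; apply Rinv_0_lt_compat, Rmult_lt_0_compat; nra].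
  pose proof (HA_pos t Ht); pose proof (HC_nonneg t Ht).
  enough (0 <= a * g ^ 2 * A t * C t * (1 - x) ^ 2) by lra.
  repeat apply Rmult_le_pos; try apply pow2_ge_0; lra.
Qed.

End Barrier.

Lemma one_sub_div_le (c D D' : R) : 0 <= c -> 0 < D -> D <= D' -> 1 - c / D <= 1 - c / D'.
Proof.
  intros Hc HD HDD'; enough (c / D' <= c / D) by lra.
  apply Rmult_le_compat_l; [exact Hc|]; apply Rinv_le_contravar; assumption.
Qed.

Lemma is_lim_one_squeeze (f : R -> R) (c s : R) : 0 < s -> 0 <= c ->
  (forall t, 0 <= t -> 1 - c / (1 + s * c * t) <= f t <= 1) -> is_lim f p_infty 1.
Proof.
  intros Hs Hc Hf; apply filterlim_locally; intros eps.
  pose proof (cond_pos eps) as Heps.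
  exists (Rmax 0 (1 / (s * eps))); intros t Ht.
  pose proof (Rmax_l 0 (1 / (s * eps))); pose proof (Rmax_r 0 (1 / (s * eps))).
  assert (Hst : 1 < s * eps * t).
  { replace 1 with (s * eps * (1 / (s * eps))) by (field; lra).
    apply Rmult_lt_compat_l; nra. }
  destruct (Hf t ltac:(lra)) as [Hlow Hup].
  assert (c / (1 + s * c * t) < eps).
  { apply Rmult_lt_reg_r with (1 + s * c * t); [nra|].
    unfold Rdiv; rewrite Rmult_assoc, Rinv_l, Rmult_1_r; nra. }
  change (Rabs (f t - 1) < eps); rewrite Rabs_left1; lra.
Qed.

Section Solution.

Variables (s a g : R) (u ux ut : R -> R -> R).
Hypotheses (Hs : 0 < s) (Ha : 0 <= a) (Hg : 0 <= g <= 1)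
  (Hu : has_partials u ux ut)
  (Hsol : forall x t, 0 <= x <= 1 -> 0 < t -> evol_op s a g u ux ut x t = 0)
  (Hinit : forall x, 0 <= x <= 1 -> u x 0 = x).

Lemma solution_le_one (x t : R) : 0 <= x <= 1 -> 0 <= t -> u x t <= 1.
Proof.
  apply (comparison_principle s a g u ux ut (fun _ _ => 1) (fun _ _ => 0) (fun _ _ => 0) Ha Hg Hu).
  - split; [apply cont_on_of_continuity_2d; intros; apply continuity_2d_pt_const|].
    intros y r _ _; split; [apply is_derive_pderiv_x|]; auto_derive; auto.
  - intros y r Hy Hr; rewrite Hsol by assumption; unfold evol_op, J0; lra.
  - intros y Hy; rewrite Hinit; lra.
Qed.

Lemma solution_ge_barrier (A C : R -> R) :
  (forall t, is_derive A t ((a * g - s) * A t)) -> (forall t, is_derive C t (s * A t)) ->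
  (forall t, 0 <= t -> 0 < A t) -> (forall t, 0 <= t -> 0 <= C t) ->
  A 0 = 1 -> C 0 = 0 ->
  forall x t, 0 <= x <= 1 -> 0 <= t -> barrier A C x t <= u x t.
Proof.
  intros HA HC HA_pos HC_nonneg HA0 HC0.
  apply (comparison_principle s a g _ _ _ u ux ut Ha Hg
           (barrier_has_partials s a g A C HA HC HA_pos HC_nonneg) Hu).
  - intros x t Hx Ht; rewrite Hsol by assumption.
    apply (barrier_evol_op_nonpos s a g A C Ha Hg HA_pos HC_nonneg); lra.
  - intros x Hx; unfold barrier; rewrite Hinit, HA0, HC0 by assumption.
    unfold Rdiv; rewrite Rmult_0_r, Rplus_0_r, Rinv_1; lra.
Qed.

Lemma solution_ge_exp (k x t : R) : k = a * g - s -> 0 < k -> 0 <= x <= 1 -> 0 <= t ->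
  1 - (1 - x) / (1 + s * (1 - x) / k * (exp (k * t) - 1)) <= u x t.
Proof.
  intros Hk Hk_pos Hx Ht.
  assert (Hgrowth : forall r, 0 <= r -> 0 <= exp (k * r) - 1)
    by (intros r Hr; pose proof (exp_ineq1_le (k * r)); nra).
  assert (Hterm : 0 <= s * (1 - x) / k * (exp (k * t) - 1)).
  { apply Rmult_le_pos; [apply Rdiv_le_0_compat; nra | now apply Hgrowth]. }
  eapply Rle_trans;
    [|apply (solution_ge_barrier (fun r => exp (k * r)) (fun r => s * (exp (k * r) - 1) / k))].
  - unfold barrier; apply one_sub_div_le; [lra|lra|].
    replace ((1 - x) * (s * (exp (k * t) - 1) / k))
      with (s * (1 - x) / k * (exp (k * t) - 1)) by (field; lra).
    pose proof (Hgrowth t Ht); lra.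
  - intro r; subst k; auto_derive; [exact I | ring].
  - intro r; auto_derive; [exact I | field; lra].
  - intros r _; apply exp_pos.
  - intros r Hr; apply Rdiv_le_0_compat; [apply Rmult_le_pos; [lra | now apply Hgrowth] | lra].
  - now rewrite Rmult_0_r, exp_0.
  - rewrite Rmult_0_r, exp_0; field; lra.
  - exact Hx.
  - exact Ht.
Qed.

Lemma solution_ge_rate (x t : R) : 0 <= a * g - s -> 0 <= x <= 1 -> 0 <= t ->
  1 - (1 - x) / (1 + s * (1 - x) * t) <= u x t.
Proof.
  intros [Hk | Hk] Hx Ht.
  - assert (0 <= s * (1 - x) * t) by (repeat apply Rmult_le_pos; lra).
    eapply Rle_trans; [|exact (solution_ge_exp (a * g - s) x t eq_refl Hk Hx Ht)].
    apply one_sub_div_le; [lra | lra |].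
    pose proof (exp_ineq1_le ((a * g - s) * t)).
    replace (s * (1 - x) * t) with (s * (1 - x) / (a * g - s) * ((a * g - s) * t))
      by (field; lra).
    apply Rplus_le_compat_l, Rmult_le_compat_l; [apply Rdiv_le_0_compat; nra | lra].
  - eapply Rle_trans; [|apply (solution_ge_barrier (fun _ => 1) (fun r => s * r))].
    + unfold barrier; right; f_equal; f_equal; ring.
    + intro r; rewrite <- Hk; auto_derive; [exact I | ring].
    + intro r; auto_derive; [exact I | ring].
    + intros; lra.
    + intros r Hr; nra.
    + reflexivity.
    + ring.
    + exact Hx.
    + exact Ht.
Qed.

Lemma solution_tends_to_one (x : R) : 0 <= a * g - s -> 0 <= x <= 1 ->
  is_lim (fun t => u x t) p_infty 1.
Proof.
  intros Hk Hx; apply (is_lim_one_squeeze _ (1 - x) s Hs ltac:(lra)).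
  intros t Ht; split; [now apply solution_ge_rate | now apply solution_le_one].
Qed.

End Solution.

Theorem proposition4p9 (f0 f1 l0 l1 g0 g1 : R) (u : R -> R -> R) :
  0 < f0 -> 0 <= f1 -> 0 < f0 - f1 ->
  0 <= l0 -> 0 <= l1 ->
  0 < g0 <= 1 -> 0 < g1 <= 1 ->
  is_solution f0 f1 l0 l1 g0 g1 u ->
  l1 * g1 = 0 ->
  l0 * g0 >= (f0 - f1) / f0 ->
  (forall x, 0 <= x <= 1 -> is_lim (fun t => u x t) p_infty 1) /\
  (forall x t, 0 <= x <= 1 -> 0 <= t ->
     u x t <= 1 /\
     (l0 * g0 > (f0 - f1) / f0 ->
        u x t >= 1 - (1 - x) /
          (1 + (f0 - f1) * (1 - x) / (l0 * g0 * f0 - (f0 - f1))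
                 * (exp ((l0 * g0 * f0 - (f0 - f1)) * t) - 1))) /\
     (l0 * g0 = (f0 - f1) / f0 ->
        u x t >= 1 - (1 - x) / (1 + (f0 - f1) * (1 - x) * t))).
Proof.
  intros Hf0 Hf1 Hs Hl0 Hl1 Hg0 Hg1 [ux [ut [Hu [_ [_ [Hux [Hut [Heq Hinit]]]]]]]] Hm1 Hm0.
  assert (Hl1_0 : l1 = 0) by (destruct (Rmult_integral _ _ Hm1); lra).
  set (s := f0 - f1) in *; set (a := l0 * f0).
  assert (Hrate : a * g0 - s = f0 * (l0 * g0 - s / f0)) by (unfold a; field; lra).
  assert (Ha : 0 <= a) by (unfold a; nra).
  assert (Hg : 0 <= g0 <= 1) by lra.
  assert (Hpart : has_partials u ux ut) by (split; [exact Hu | split; auto]).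
  assert (Hsol : forall x t, 0 <= x <= 1 -> 0 < t -> evol_op s a g0 u ux ut x t = 0)
    by (intros x t Hx Ht; unfold evol_op, a, s; rewrite Heq, Hl1_0 by assumption; ring).
  assert (Hk : 0 <= a * g0 - s) by (rewrite Hrate; apply Rmult_le_pos; lra).
  split; [intros x; now apply (solution_tends_to_one s a g0 u ux ut)|].
  intros x t Hx Ht; split; [now apply (solution_le_one s a g0 u ux ut)|].
  split; intro Hcase; apply Rle_ge.
  - apply (solution_ge_exp s a g0 u ux ut); try assumption; [unfold a; ring|].
    replace (l0 * g0 * f0 - s) with (a * g0 - s) by (unfold a; ring).
    rewrite Hrate; apply Rmult_lt_0_compat; lra.
  - now apply (solution_ge_rate s a g0 u ux ut).
Qed.
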